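(* Let $P=\forall x_1,\dots,x_n\,\exists y_1(D_1),\dots,y_k(D_k)$ be a topologically sorted prefix for $X$ and $Y$, let $G_{\mathrm{syn}}$ be an admissible group w.r.t. $P$, and let $G\subseteq G_{\mathrm{syn}}$ be a finite subset such that for all $g\in G$ and all $i,j\in\{1,\dots,k\}$: (1) $g(x)\in\operatorname{BF}(D_i)$ for all $x\in D_i$; (2) $g(y_i)\in\operatorname{BF}(\{y_j\mid D_j=D_i\})$; (3) if $D_i$ and $D_j$ are incomparable (neither $D_i\subseteq D_j$ nor $D_j\subseteq D_i$) and $g(y_i)\neq y_i$, then $g(y_j)=y_j$ and $g(x)=x$ for all $x\in D_j\setminus D_i$. Then \[\psi=\bigwedge_{g\in G}\bigwedge_{i=1}^{k}\Big(\Big(\bigwedge_{x\in D_i}(x\leftrightarrow g(x))\wedge\bigwedge_{j<i}(y_j\leftrightarrow g(y_j))\Big)\rightarrow\big(y_i\rightarrow g(y_i)\big)\Big)\] is a conjunctive symmetry breaker for the associated group of $G_{\mathrm{syn}}$.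
   Context: $X=\{x_1,\dots,x_n\}$, $Y=\{y_1,\dots,y_k\}$ are finite disjoint sets of propositional variables; for $V\subseteq X\cup Y$, $\operatorname{BF}(V)$ is the set of propositional formulas over $V$ (built from $\top,\bot$, variables and connectives); $\mathcal A(V)$ is the set of assignments $\sigma:V\to\{\top,\bot\}$ and $[\phi]_\sigma$ the truth value. A prefix $P=\forall x_1,\dots,x_n\,\exists y_1(D_1),\dots,y_k(D_k)$ has dependency sets $D_j\subseteq X$; it is topologically sorted if $D_i\subsetneq D_j$ implies $i<j$. An interpretation is $s=(s_1,\dots,s_k)$ with $s_j:\{\top,\bot\}^{|D_j|}\to\{\top,\bot\}$; $\mathcal S(P)$ is the set of interpretations. For $\sigma\in\mathcal A(X)$, the induced assignment $\sigma_s\in\mathcal A(X\cup Y)$ equals $\sigma$ on $X$ and $\sigma_s(y_j)=s_j$ evaluated at the values of $\sigma$ on $D_j$ (variables in increasing index order). For a DQBF $P.\phi$ ($\phi\in\operatorname{BF}(X\cup Y)$), $[P.\phi]_s=\bigwedge_{\sigma\in\mathcal A(X)}[\phi]_{\sigma_s}$. For a function $g:\operatorname{BF}(V)\to\operatorname{BF}(V)$ and $\sigma\in\mathcal A(V)$, $g(\sigma)\in\mathcal A(V)$ is $g(\sigma)(v)=[g(v)]_\sigma$; $g$ preserves propositional satisfiability if $[g(\phi)]_\sigma=[\phi]_{g(\sigma)}$ for all $\sigma,\phi$. A formula in $\operatorname{BF}(Y)$ depends on $x_i$ if it contains some $y_j$ with $x_i\in D_j$. A bijection $g:\operatorname{BF}(X\cup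 Y)\to\operatorname{BF}(X\cup Y)$ is admissible w.r.t. $P$ if it preserves propositional satisfiability, $g(x_i)\in\operatorname{BF}(X)$ and $g(y_j)\in\operatorname{BF}(Y)$ for all $i,j$, and whenever $g(y_j)$ depends on $x_i$ then $g^{-1}(x_i)\in\operatorname{BF}(D_j)$. An admissible group is a subgroup (under composition) of the group of all admissible functions. For admissible $g$ and $\sigma\in\mathcal A(X)$, $g(\sigma)\in\mathcal A(X)$ is defined by $g(\sigma)(x)=[g(x)]_\sigma$. The associated group $G_{\mathrm{sem}}$ of an admissible group $G_{\mathrm{syn}}$ is the set of all bijections $f:\mathcal S(P)\to\mathcal S(P)$ such that for every $s\in\mathcal S(P)$ and every $\sigma\in\mathcal A(X)$ there exists $g\in G_{\mathrm{syn}}$ with $g(\sigma)_{f(s)}=g(\sigma_s)$. Given a group $G_{\mathrm{sem}}$ of bijections of $\mathcal S(P)$, a formula $\psi\in\operatorname{BF}(X\cup Y)$ is a conjunctive symmetry breaker for $G_{\mathrm{sem}}$ if for every $s\in\mathcal S(P)$ there is $g\in G_{\mathrm{sem}}$ with $[P.\psi]_{g(s)}=\top$. *)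

From mathcomp Require Import all_boot.
Set Implicit Arguments. Unset Strict Implicit. Unset Printing Implicit Defensive.

Inductive var (n k : nat) : Type := XV of 'I_n | YV of 'I_k.
Arguments XV {n k}. Arguments YV {n k}.

Inductive form (n k : nat) : Type :=
| FTop | FBot | FVar of var n k | FNeg of form n k
| FAnd of form n k & form n k | FOr of form n k & form n k
| FImp of form n k & form n k | FIff of form n k & form n k.
Arguments FTop {n k}. Arguments FBot {n k}.

Section Defs.
Variables (n k : nat).
Local Notation var := (var n k).
Local Notation form := (form n k).

Fixpoint eval (s : var -> bool) (f : form) : bool :=
  match f with
  | FTop => true | FBot => false | FVar v => s v
  | FNeg a => ~~ eval s a
  | FAnd a b => eval s a && eval s b
  | FOr a b => eval s a || eval s b
  | FImp a b => eval s a ==> eval s b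
  | FIff a b => eval s a == eval s b
  end.

Fixpoint occurs (v : var) (f : form) : Prop :=
  match f with
  | FTop | FBot => False | FVar w => w = v
  | FNeg a => occurs v a
  | FAnd a b | FOr a b | FImp a b | FIff a b => occurs v a \/ occurs v b
  end.

Definition inBF (V : var -> Prop) (f : form) : Prop :=
  forall v, occurs v f -> V v.

Definition Xset (A : {set 'I_n}) : var -> Prop :=
  fun v => match v with XV i => i \in A | YV _ => False end.
Definition allX : var -> Prop := fun v => match v with XV _ => True | YV _ => False end.
Definition allY : var -> Prop := fun v => match v with XV _ => False | YV _ => True end.

Definition fun_asg (g : form -> form) (s : var -> bool) : var -> bool :=
  fun v => eval s (g (FVar v)).

Variable D : 'I_k -> {set 'I_n}.

Definition topsorted : Prop :=
  forall i j : 'I_k, D i \proper D j -> (i < j)%N.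

(* g(y_j) (a formula in BF(Y)) depends on x_i *)
Definition depends_on (f : form) (i : 'I_n) : Prop :=
  exists l : 'I_k, occurs (YV l) f /\ i \in D l.

Definition admissible (g : form -> form) : Prop :=
  [/\ bijective g,
      (forall s f, eval s (g f) = eval (fun_asg g s) f),
      (forall i, inBF allX (g (FVar (XV i)))),
      (forall j, inBF allY (g (FVar (YV j)))) &
      (* whenever g(y_j) depends on x_i, g^{-1}(x_i) lies in BF(D_j) *)
      (forall (j : 'I_k) (i : 'I_n), depends_on (g (FVar (YV j))) i ->
         forall f, g f = FVar (XV i) -> inBF (Xset (D j)) f)].

Definition admissible_group (Gs : (form -> form) -> Prop) : Prop :=
  [/\ (forall g, Gs g -> admissible g),
      Gs id,
      (forall g h, Gs g -> Gs h -> Gs (g \o h)) &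
      (forall g, Gs g -> exists h, [/\ Gs h, cancel g h & cancel h g])].

Definition interp := {dffun forall j : 'I_k, {ffun {ffun 'I_#|D j| -> bool} -> bool}}.

(* extension of sigma in A(X) to all variables (values of Y are irrelevant
   when evaluating formulas of BF(X)) *)
Definition extX (s : 'I_n -> bool) : var -> bool :=
  fun v => match v with XV i => s i | YV _ => false end.

(* induced assignment sigma_s; arguments of s_j are the values of D_j's
   variables in increasing index order (enum of a set of ordinals is sorted) *)
Definition induced (s : 'I_n -> bool) (t : interp) : var -> bool :=
  fun v => match v with
           | XV i => s i
           | YV j => t j [ffun p : 'I_#|D j| => s (enum_val p)]
           end.

Definition fun_asgX (g : form -> form) (s : 'I_n -> bool) : 'I_n -> bool :=
  fun i => eval (extX s) (g (FVar (XV i))).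

Definition sem_group (Gs : (form -> form) -> Prop) (f : interp -> interp) : Prop :=
  bijective f /\
  forall (t : interp) (s : 'I_n -> bool), exists g, Gs g /\
    forall v, induced (fun_asgX g s) (f t) v = fun_asg g (induced s t) v.

Definition dqbf_val (phi : form) (t : interp) : Prop :=
  forall s : 'I_n -> bool, eval (induced s t) phi.

Definition conj_symmetry_breaker (Gsem : (interp -> interp) -> Prop) (psi : form) : Prop :=
  forall t : interp, exists f, Gsem f /\ dqbf_val psi (f t).

Definition bigAnd (l : seq form) : form := foldr (@FAnd n k) FTop l.

Definition psi_of (G : seq (form -> form)) : form :=
  bigAnd [seq bigAnd [seq FImp
             (FAnd (bigAnd [seq FIff (FVar (XV x)) (g (FVar (XV x))) | x <- enum (D i)])
                   (bigAnd [seq FIff (FVar (YV j)) (g (FVar (YV j))) | j <- [seq j : 'I_k <- enum 'I_k | (j < i)%N]]))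
             (FImp (FVar (YV i)) (g (FVar (YV i)))) | i : 'I_k <- enum 'I_k] | g <- G].

Definition Yclass (i : 'I_k) : var -> Prop :=
  fun v => match v with XV _ => False | YV j => D j = D i end.

Definition side_conditions (g : form -> form) : Prop :=
  forall i j : 'I_k,
  [/\ (forall x, x \in D i -> inBF (Xset (D i)) (g (FVar (XV x)))),
      inBF (Yclass i) (g (FVar (YV i))) &
      (~ (D i \subset D j) -> ~ (D j \subset D i) -> g (FVar (YV i)) <> FVar (YV i) ->
         g (FVar (YV j)) = FVar (YV j) /\
         forall x, x \in D j :\: D i -> g (FVar (XV x)) = FVar (XV x))].

End Defs.

(** Starting from any interpretation, repeatedly repair a violated clause of
    psi.  If the clause for g and y_i fails at sigma, redefine every y_j on
    the arguments g(tau) for all tau agreeing with sigma on D_i so as to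
    mimic g; the side conditions make this a well-defined interpretation
    that is related to the old one, in both directions, by the elements g
    and g^-1 of G_syn, so the transposition of the two interpretations lies
    in the associated group.  The new interpretation coincides with the old
    one on y_1, ..., y_(i-1) and its y_i has strictly fewer models, so the
    repair terminates: the vector of model counts decreases
    lexicographically. *)
From mathcomp Require Import all_boot perm zify.
From Stdlib Require List.
From Stdlib Require Import Classical.
Set Implicit Arguments. Unset Strict Implicit. Unset Printing Implicit Defensive.

Lemma all_false_In (T : Type) (p : pred T) (l : seq T) :
  all p l = false -> exists2 a, List.In a l & p a = false.
Proof.
elim: l => //= a l IH; case: (boolP (p a)) => [pa /= /IH [b lb pb]|/negbTE pa _].
- by exists b; [right|].
- by exists a; [left|].
Qed.

Section Formulas.
Variables (n k : nat).
Local Notation form := (form n k).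
Local Notation var := (var n k).
Implicit Types (s : var -> bool) (f : form).

Lemma eval_agree s s' f :
  (forall v, occurs v f -> s v = s' v) -> eval s f = eval s' f.
Proof.
elim: f => //= [v -> //|a IH E|a IHa b IHb E|a IHa b IHb E|a IHa b IHb E|a IHa b IHb E];
  by rewrite ?IH ?IHa ?IHb // => v ov; apply: E; auto.
Qed.

Lemma eval_ext s s' f : s =1 s' -> eval s f = eval s' f.
Proof. by move=> E; apply: eval_agree => v _. Qed.

Lemma eval_inBF (V : var -> Prop) s s' f :
  inBF V f -> (forall v, V v -> s v = s' v) -> eval s f = eval s' f.
Proof. by move=> Vf E; apply: eval_agree => v /Vf /E. Qed.

Lemma eval_bigAnd s (l : seq form) : eval s (bigAnd l) = all (eval s) l.
Proof. by elim: l => //= a l ->. Qed.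

Variable D : 'I_k -> {set 'I_n}.

Lemma psi_of_false (G : seq (form -> form)) s :
  eval s (psi_of D G) = false ->
  exists g i, [/\ List.In g G,
    {in D i, forall x, s (XV x) = eval s (g (FVar (XV x)))},
    (forall j : 'I_k, (j < i)%N -> s (YV j) = eval s (g (FVar (YV j)))),
    s (YV i) & eval s (g (FVar (YV i))) = false].
Proof.
rewrite eval_bigAnd all_map => /all_false_In [g Gg] /=.
rewrite eval_bigAnd all_map => /negbT /allPn [i _] /=.
rewrite negb_imply => /andP [/andP []]; rewrite !eval_bigAnd !all_map.
move=> /allP HX /allP HY; rewrite negb_imply => /andP [yi /negbTE gyi].
exists g, i; split => // [x xDi|j ji].
- by apply/eqP; apply: HX; rewrite mem_enum.
- by apply/eqP; apply: HY; rewrite mem_filter ji mem_enum.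
Qed.

End Formulas.

Section Digits.
Variable B : nat.

Fixpoint digits_val (c : nat -> nat) (p m : nat) : nat :=
  if m is m'.+1 then c p * B ^ m' + digits_val c p.+1 m' else 0.

Lemma digits_val_lt c p m : (forall q, c q < B) -> digits_val c p m < B ^ m.
Proof.
move=> cB; elim: m p => [|m IH] p //=; rewrite expnS.
have := IH p.+1; have := cB p; move: (B ^ m) (digits_val c p.+1 m) (c p) => X e d.
nia.
Qed.

Lemma digits_val_lex c c' p m i : (forall q, c' q < B) ->
  p <= i < p + m -> (forall q, p <= q < i -> c' q = c q) -> c' i < c i ->
  digits_val c' p m < digits_val c p m.
Proof.
move=> c'B; elim: m p => [|m IH] p /=; first by lia.
move=> pim eq_pre lt_i; have [->|pi] := eqVneq p i.
  have := digits_val_lt i.+1 m c'B.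
  move: (B ^ m) (digits_val c' i.+1 m) (digits_val c i.+1 m) lt_i => X e' e; nia.
rewrite eq_pre ?ltn_add2l; last by lia.
by apply: IH => // [|q qi]; [lia|apply: eq_pre; lia].
Qed.

End Digits.

Section Interpretations.
Variables (n k : nat) (D : 'I_k -> {set 'I_n}).
Local Notation form := (form n k).
Local Notation interp := (interp D).
Implicit Types (g : form -> form) (s : 'I_n -> bool) (t : interp).

Definition args s (j : 'I_k) : {ffun 'I_#|D j| -> bool} :=
  [ffun p => s (enum_val p)].

Lemma induced_YV s t j : induced s t (YV j) = t j (args s j).
Proof. by []. Qed.

Lemma args_eq s s' j : args s j = args s' j <-> {in D j, s =1 s'}.
Proof.
split=> [E x xDj|E].
- have := congr1 (fun a : {ffun 'I_#|D j| -> bool} => a (enum_rank_in xDj x)) E.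
  by rewrite !ffunE enum_rankK_in.
- by apply/ffunP => p; rewrite !ffunE E // enum_valP.
Qed.

Lemma args_ext s s' j : s =1 s' -> args s j = args s' j.
Proof. by move=> E; apply/args_eq => x _. Qed.

Lemma induced_ext s s' t : s =1 s' -> induced s t =1 induced s' t.
Proof. by move=> E [x|j]; [apply: E|rewrite !induced_YV (args_ext j E)]. Qed.

Lemma fun_asgX_ext g s s' : s =1 s' -> fun_asgX g s =1 fun_asgX g s'.
Proof. by move=> E x; apply: eval_ext => [[y|j]] /=. Qed.

Lemma fun_asgX_id s : fun_asgX (@id form) s =1 s.
Proof. by []. Qed.

Definition count_models t (j : 'I_k) := #|[set tau | t j tau]|.

Definition digit_bound := (\max_(j : 'I_k) #|{ffun 'I_#|D j| -> bool}|).+1.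

Definition count_digit t (q : nat) :=
  if insub q is Some j then count_models t j else 0.

Definition lex_measure t := digits_val digit_bound (count_digit t) 0 k.

Lemma count_digit_lt t q : count_digit t q < digit_bound.
Proof.
rewrite /count_digit; case: insub => // j; rewrite ltnS (leq_trans (max_card _)) //.
exact: (leq_bigmax (F := fun j : 'I_k => #|{ffun 'I_#|D j| -> bool}|)).
Qed.

Lemma lex_measure_lt t t' (i : 'I_k) : (forall j : 'I_k, j < i -> t' j = t j) ->
  [set tau | t' i tau] \proper [set tau | t i tau] -> lex_measure t' < lex_measure t.
Proof.
move=> eq_pre lt_i; apply: (digits_val_lex (i := i)) => //.
- exact: count_digit_lt.
- by rewrite add0n ltn_ord.
- move=> q /andP [_ qi]; rewrite /count_digit; case: insubP => // j _ jq.
  by rewrite /count_models eq_pre // jq.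
- by rewrite /count_digit valK; apply: proper_card.
Qed.

Variable Gsyn : (form -> form) -> Prop.
Hypothesis HG : admissible_group D Gsyn.

Lemma Gsyn_eval g (s : var n k -> bool) f :
  Gsyn g -> eval s (g f) = eval (fun_asg g s) f.
Proof. by case: HG => adm _ _ _ /adm []. Qed.

Lemma Gsyn_XV g x : Gsyn g -> inBF (@allX n k) (g (FVar (XV x))).
Proof. by case: HG => adm _ _ _ /adm []. Qed.

Lemma fun_asgX_induced g s t x :
  Gsyn g -> fun_asgX g s x = eval (induced s t) (g (FVar (XV x))).
Proof.
by move=> Gg; rewrite /fun_asgX; apply: (eval_inBF (Gsyn_XV (x := x) Gg)) => [[]].
Qed.

Lemma fun_asgX_comp g1 g2 s : Gsyn g1 -> Gsyn g2 ->
  fun_asgX (g2 \o g1) s =1 fun_asgX g1 (fun_asgX g2 s).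
Proof.
move=> G1 G2 x; rewrite /fun_asgX /= Gsyn_eval //.
by apply: (eval_inBF (Gsyn_XV (x := x) G1)) => [[]].
Qed.

(* [sem_group Gsyn f] means [bijective f] and [syn_rel t (f t)] for all [t]. *)
Definition syn_rel t t' := forall s, exists g, Gsyn g /\
  forall v, induced (fun_asgX g s) t' v = fun_asg g (induced s t) v.

Lemma syn_rel_refl t : syn_rel t t.
Proof. by move=> s; exists id; split=> [|[]] //; case: HG. Qed.

Lemma syn_rel_trans t1 t2 t3 : syn_rel t1 t2 -> syn_rel t2 t3 -> syn_rel t1 t3.
Proof.
move=> R12 R23 s; have [g1 [G1 E1]] := R12 s.
have [g2 [G2 E2]] := R23 (fun_asgX g1 s).
exists (g1 \o g2); split=> [|v]; first by case: HG => _ _ + _; apply.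
rewrite (induced_ext t3 (fun_asgX_comp s G2 G1)) E2 /fun_asg /=.
by rewrite [RHS]Gsyn_eval //; apply: eval_ext => w; rewrite E1.
Qed.

Lemma sem_group_tperm t t' :
  syn_rel t t' -> syn_rel t' t -> sem_group Gsyn (tperm t t').
Proof.
move=> R R'; split=> [|u]; first by exists (tperm t t'); apply: tpermK.
by case: tpermP => [->|->|_ _] //; apply: syn_rel_refl.
Qed.

Section Repair.
Hypothesis Htop : topsorted D.
Variables (u : interp) (g h : form -> form) (s0 : 'I_n -> bool) (i : 'I_k).
Hypotheses (Gg : Gsyn g) (Gh : Gsyn h) (gK : cancel g h) (hK : cancel h g).
Hypothesis sc : side_conditions D g.
Local Notation sigma0 := (induced s0 u).
Hypothesis fix_Di : {in D i, forall x, sigma0 (XV x) = eval sigma0 (g (FVar (XV x)))}.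
Hypothesis fix_lt :
  forall j : 'I_k, (j < i)%N -> sigma0 (YV j) = eval sigma0 (g (FVar (YV j))).
Hypothesis yi_true : sigma0 (YV i).
Hypothesis gyi_false : eval sigma0 (g (FVar (YV i))) = false.
Local Notation gs := (fun_asgX g).

Definition agree0 s := [forall x in D i, s x == s0 x].

Lemma agree0P s : reflect {in D i, s =1 s0} (agree0 s).
Proof. by apply: (iffP forall_inP) => E x /E /eqP. Qed.

Lemma agree0_ext s s' : s =1 s' -> agree0 s = agree0 s'.
Proof. by move=> E; apply: eq_forallb => x; rewrite E. Qed.

Lemma agree0_s0 : agree0 s0.
Proof. exact/agree0P. Qed.

Lemma agree0_gs s : agree0 s -> agree0 (gs s).
Proof.
move/agree0P=> Es; apply/agree0P => x xDi; have [gDi _ _] := sc i i.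
rewrite /fun_asgX (eval_inBF (gDi x xDi) (s' := extX s0)); last by case=> //= y /Es.
by rewrite -[LHS]/(gs s0 x) (fun_asgX_induced _ u _ Gg) -fix_Di.
Qed.

Lemma args_gs_sub s j : agree0 s -> D j \subset D i -> args (gs s) j = args s0 j.
Proof.
move=> /agree0_gs/agree0P Es /subsetP Dji; apply/args_eq => x /Dji; exact: Es.
Qed.

(* The values of g(y_j) only involve the y_m with D_m = D_j, and admissibility
   lets the D_m-part of s be recovered from the D_j-part of g(s) through
   x = g(g^-1(x)). *)
Lemma eval_gy_args s s' j : args (gs s) j = args (gs s') j ->
  eval (induced s u) (g (FVar (YV j))) = eval (induced s' u) (g (FVar (YV j))).
Proof.
move/args_eq=> E; have [_ gYj _] := sc j j; case: (HG) => /(_ g Gg) adm _ _ _.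
have [_ geval _ _ gdep] := adm.
apply: eval_agree => -[x|m] /[dup] occ /gYj //= Dmj; congr (u m _); apply/args_eq => x xDm.
have hx : inBF (Xset (D j)) (h (FVar (XV x))) by apply: (gdep j x) => //; exists m.
have recover s1 : s1 x = eval (fun_asg g (extX s1)) (h (FVar (XV x))).
  by rewrite -geval hK.
by rewrite !recover; apply: (eval_inBF hx) => -[y /E|].
Qed.

Lemma eval_gy_agree0 s j : agree0 s -> ~~ (D i \subset D j) || (j < i)%N ->
  eval (induced s u) (g (FVar (YV j))) = u j (args (gs s) j).
Proof.
move=> Ss Dij_or_lt; have [Dji|nDji] := boolP (D j \subset D i).
  have ji : (j < i)%N.
    by case/orP: Dij_or_lt => // nDij; apply: Htop; rewrite properE Dji.
  rewrite (@eval_gy_args _ s0); last by rewrite !args_gs_sub ?agree0_s0.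
  by rewrite -fix_lt // args_gs_sub.
have nDij : ~~ (D i \subset D j).
  apply: contraTN Dij_or_lt => Dij; rewrite Dij -leqNgt ltnW //.
  by apply: Htop; rewrite properE Dij.
have gyi_moved : g (FVar (YV i)) <> FVar (YV i).
  by move=> E; move: gyi_false yi_true; rewrite E /= => ->.
have [_ _ incomparable] := sc i j.
have [-> gfix] := incomparable (negP nDij) (negP nDji) gyi_moved.
congr (u j _); apply/args_eq => x xDj; have [xDi|nxDi] := boolP (x \in D i).
- by move/agree0P: (Ss) => ->; [move/agree0_gs/agree0P: Ss => ->|].
- by rewrite /fun_asgX gfix // inE nxDi.
Qed.

Definition preimage_gs j (tau : {ffun 'I_#|D j| -> bool}) (s : {ffun 'I_n -> bool}) :=
  agree0 s && (args (gs s) j == tau).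

Definition repair : interp := [ffun j => [ffun tau =>
  if [pick s | preimage_gs tau s] is Some s
  then eval (induced s u) (g (FVar (YV j))) else u j tau]].

Lemma repairE j tau : repair j tau =
  if [pick s | preimage_gs tau s] is Some s
  then eval (induced s u) (g (FVar (YV j))) else u j tau.
Proof. by rewrite !ffunE. Qed.

Lemma preimage_gs_nonempty s j :
  agree0 s -> ~ preimage_gs (args (gs s) j) =1 xpred0.
Proof.
move=> Ss /(_ [ffun x => s x]); rewrite /preimage_gs.
have fE : [ffun x => s x] =1 s by move=> x; rewrite ffunE.
by rewrite (agree0_ext fE) (args_ext j (fun_asgX_ext g fE)) Ss eqxx.
Qed.

Lemma repair_agree0 s j :
  agree0 s -> repair j (args (gs s) j) = eval (induced s u) (g (FVar (YV j))).
Proof.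
move=> Ss; rewrite repairE; case: pickP => [s' /andP [_ /eqP]|/preimage_gs_nonempty] //.
exact: eval_gy_args.
Qed.

Lemma repair_not_agree0 s j : ~~ agree0 s -> repair j (args s j) = u j (args s j).
Proof.
move=> nSs; rewrite repairE; case: pickP => // s' /andP [Ss' /eqP E].
rewrite eval_gy_agree0 ?E //; apply/orP; left; apply: contra nSs => Dij.
apply/agree0P => x xDi; move/args_eq: E => <-; last exact: subsetP xDi.
by move/agree0_gs/agree0P: Ss' => ->.
Qed.

Lemma repair_lt (j : 'I_k) : (j < i)%N -> repair j = u j.
Proof.
move=> ji; apply/ffunP => tau; rewrite repairE; case: pickP => // s /andP [Ss /eqP <-].
by rewrite eval_gy_agree0 // ji orbT.
Qed.

Lemma gyi_agree0 s : agree0 s -> eval (induced s u) (g (FVar (YV i))) = false.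
Proof.
by move=> Ss; rewrite -gyi_false; apply: eval_gy_args; rewrite !args_gs_sub ?agree0_s0.
Qed.

Lemma repair_i_proper : [set tau | repair i tau] \proper [set tau | u i tau].
Proof.
apply/properP; split.
- apply/subsetP => tau; rewrite !inE repairE.
  by case: pickP => // s /andP [Ss _]; rewrite gyi_agree0.
- exists (args s0 i); rewrite !inE // -(args_gs_sub agree0_s0) //.
  by rewrite repair_agree0 ?agree0_s0 ?gyi_agree0 ?agree0_s0.
Qed.

(* g acts injectively on the finitely many assignments agreeing with s0 on
   D_i and maps them into themselves, hence onto them. *)
Lemma agree0_hs s : agree0 s -> agree0 (fun_asgX h s).
Proof.
pose S := [set s : {ffun 'I_n -> bool} | agree0 s].
pose gsf (s : {ffun 'I_n -> bool}) : {ffun 'I_n -> bool} := [ffun x => gs s x].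
have gsfE (s1 : {ffun 'I_n -> bool}) : gsf s1 =1 gs s1 by move=> x; rewrite ffunE.
have hgs s1 : fun_asgX h (gs s1) =1 s1.
  by move=> x; rewrite -fun_asgX_comp // /fun_asgX /= hK.
have gsf_inj : injective gsf.
  move=> s1 s2 E; apply/ffunP => x; rewrite -hgs -[s2 x]hgs.
  by apply: fun_asgX_ext => y; rewrite -!gsfE E.
have gsfS : gsf @: S \subset S.
  apply/subsetP => _ /imsetP [s1 + ->]; rewrite !inE (agree0_ext (gsfE s1)).
  exact: agree0_gs.
have gsf_onto : gsf @: S = S.
  by apply/eqP; rewrite eqEcard gsfS (card_imset _ gsf_inj) leqnn.
move=> Ss; have : [ffun x => s x] \in gsf @: S by rewrite gsf_onto inE (agree0_ext (ffunE _)).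
case/imsetP => s1; rewrite inE => Ss1 E.
have s_gs : s =1 gs s1 by move=> x; rewrite -gsfE -E ffunE.
by rewrite (agree0_ext (fun_asgX_ext h s_gs)) (agree0_ext (hgs s1)).
Qed.

Lemma repair_gs s :
  agree0 s -> forall v, induced (gs s) repair v = fun_asg g (induced s u) v.
Proof.
by move=> Ss [x|j]; rewrite ?induced_YV ?repair_agree0 // /= (fun_asgX_induced _ u _ Gg).
Qed.

Lemma syn_rel_repair : syn_rel u repair.
Proof.
move=> s; have [Ss|nSs] := boolP (agree0 s); first by exists g; split; [|exact: repair_gs].
exists id; split=> [|[x|j]] //; first by case: HG.
by rewrite induced_YV (args_ext j (fun_asgX_id s)) repair_not_agree0.
Qed.

Lemma syn_rel_unrepair : syn_rel repair u.
Proof.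
move=> s; have [Ss|nSs] := boolP (agree0 s).
- exists h; split=> // v; set s1 := fun_asgX h s.
  have gs1 : gs s1 =1 s by move=> x; rewrite -fun_asgX_comp // /fun_asgX /= gK.
  rewrite /fun_asg -(eval_ext _ (induced_ext repair gs1)).
  by rewrite (eval_ext _ (repair_gs (agree0_hs Ss))) -Gsyn_eval // hK.
- exists id; split=> [|[x|j]] //; first by case: HG.
  by rewrite induced_YV (args_ext j (fun_asgX_id s)) -repair_not_agree0.
Qed.

Lemma repair_descends :
  [/\ syn_rel u repair, syn_rel repair u & lex_measure repair < lex_measure u].
Proof.
split; [exact: syn_rel_repair|exact: syn_rel_unrepair|].
by apply: (lex_measure_lt (i := i)); [exact: repair_lt|exact: repair_i_proper].
Qed.

End Repair.
End Interpretations.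

Section Descent.
Variables (n k : nat) (D : 'I_k -> {set 'I_n}).
Variable Gsyn : (form n k -> form n k) -> Prop.
Hypothesis HG : admissible_group D Gsyn.
Hypothesis Htop : topsorted D.
Variable G : seq (form n k -> form n k).
Hypothesis GGsyn : forall g, List.In g G -> Gsyn g.
Hypothesis Gsc : forall g, List.In g G -> side_conditions D g.

Lemma exists_related_psi_model (t : interp D) :
  exists w, [/\ syn_rel Gsyn t w, syn_rel Gsyn w t & dqbf_val (psi_of D G) w].
Proof.
have [m] := ubnP (lex_measure t); elim: m t => // m IH t /ltnSE le_m.
have [psi_t|] := classic (dqbf_val (psi_of D G) t).
  by exists t; split=> //; apply: syn_rel_refl.
case/not_all_ex_not => s0 /negP /negbTE /psi_of_false [g [i [Gg HX HY yi gyi]]].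
have Gsyn_g := GGsyn Gg; have [_ _ _ /(_ g Gsyn_g) [h [Gh gK hK]]] := HG.
have [R R' lt_t] := repair_descends HG Htop Gsyn_g Gh gK hK (Gsc Gg) HX HY yi gyi.
have [w [Rw Rw' Pw]] := IH _ (leq_trans lt_t le_m).
by exists w; split=> //; [exact: syn_rel_trans R Rw|exact: syn_rel_trans Rw' R'].
Qed.

End Descent.

Theorem theorem2 (n k : nat) (D : 'I_k -> {set 'I_n})
  (Gsyn : (form n k -> form n k) -> Prop) (G : seq (form n k -> form n k)) :
  topsorted D ->
  admissible_group D Gsyn ->
  (forall g, List.In g G -> Gsyn g) ->
  (forall g, List.In g G -> side_conditions D g) ->
  @conj_symmetry_breaker n k D (sem_group Gsyn) (psi_of D G).
Proof.
move=> Htop HG GGsyn Gsc t.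
have [w [Rtw Rwt Pw]] := exists_related_psi_model HG Htop GGsyn Gsc t.
by exists (tperm t w); split; [exact: sem_group_tperm | rewrite tpermL].
Qed.
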